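(* Fix a countable collection of languages $\mathcal{L}$, $c\in(0,1]$ and $\rho\in(0,1]$. Under enumerations with constant noise rate $c$ and arbitrary omissions, there exists a set-based generator that generates in the limit from $\mathcal{L}$ and achieves set-based lower density $\rho$ if and only if the following holds: for every non-empty finite subcollection $\mathcal{L}'\subseteq\mathcal{L}$ and every enumeration $x_{1:\infty}$, either (a) there exists $L'\in\mathcal{L}'$ with $R(L';x_{1:n})>c$ for infinitely many $n$, or (b) every $L\in\mathcal{L}'$ satisfies $\mu_{\rm low}\big(\bigcap_{L''\in\mathcal{L}'}L'',\,L\big)\ge\rho$.
   Context: The universe is $U=\mathbb{N}$ with its natural order. A language is an infinite subset of $U$; a collection is a countable family of languages. For $A,B\subseteq\mathbb{N}$ with $B=\{b_1<b_2<\cdots\}$, $\mu_{\rm low}(A,B)=\liminf_n\frac1n|A\cap\{b_1,\dots,b_n\}|$. An enumeration is a sequence of distinct elements of $U$; $S_n=\{x_1,\dots,x_n\}$; the empirical noise rate is $R(L;x_{1:n})=\frac1n|\{t\le n:x_t\notin L\}|$. An enumeration of $K$ with $c$-noise and arbitrary omissions is a sequence in which every element of some infinite $\hat K\subseteq K$ appears exactly once and $R(\hat K;x_{1:n})\le c$ for all sufficiently large $n$. A set-based generator is a sequence of maps that, given $x_1,\dots,x_n$ (and knowledge of $\mathcal{L}$, not of $K$), outputs $A_n\subseteq U\setminus S_n$. It generates in the limit if for every $K\in\mathcal{L}$ and admissible enumeration of $K$ there is $n^\star$ with $A_n\subseteq K$ for all $n\ge n^\star$; it achieves set-based lower density $\rho$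 if $\liminf_n\mu_{\rm low}(A_n,K)\ge\rho$ for every such $K$ and enumeration. *)

From HB Require Import structures.
From mathcomp Require Import all_boot all_order all_algebra.
From mathcomp Require Import all_classical all_reals all_analysis.
Set Implicit Arguments. Unset Strict Implicit. Unset Printing Implicit Defensive.
Import Order.TTheory GRing.Theory Num.Theory.

(* Subsets of the universe U = nat are boolean predicates (no loss of
   generality classically).  Enumerations are indexed from 0:
   x 0 = x_1, ..., x (n-1) = x_n. *)

Definition infinite_lang (A : pred nat) : Prop :=
  forall m, exists n, (m <= n)%N /\ A n.

Definition enumeration (x : nat -> nat) : Prop := injective x.

Definition prefix (x : nat -> nat) (n : nat) : seq nat := map x (iota 0 n).

Section Defs.
Context {R : realType}.
Local Open Scope ring_scope.

Definition noise_rate (L : pred nat) (x : nat -> nat) (n : nat) : R :=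
  (count (fun t => ~~ L (x t)) (iota 0 n))%:R / n%:R.

(* The t-th element (0-based) in increasing order of B: the element b of B
   with exactly t elements of B below it (well defined when B is infinite). *)
Definition nth_elt (B : pred nat) (t : nat) : nat :=
  xget 0%N [set b | B b /\ count B (iota 0 b) = t].

Definition mu_low (A B : pred nat) : \bar R :=
  limn_einf (fun n : nat =>
    ((count (fun t => A (nth_elt B t)) (iota 0 n.+1))%:R / n.+1%:R : R)%:E).

Definition noisy_enum (c : R) (K : pred nat) (x : nat -> nat) : Prop :=
  enumeration x /\
  exists Khat : pred nat,
    [/\ (forall y, Khat y -> K y), infinite_lang Khat,
        (forall y, Khat y -> exists t, x t = y) &
        exists N, forall n, (N <= n)%N -> noise_rate Khat x n <= c].

Definition set_generator (G : seq nat -> pred nat) : Prop :=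
  forall s y, y \in s -> ~~ G s y.

Definition generates_in_limit (c : R) (Lang : nat -> pred nat)
  (G : seq nat -> pred nat) : Prop :=
  forall i x, noisy_enum c (Lang i) x ->
    exists nstar, forall n, (nstar <= n)%N ->
      forall y, G (prefix x n) y -> Lang i y.

Definition achieves_density (c rho : R) (Lang : nat -> pred nat)
  (G : seq nat -> pred nat) : Prop :=
  forall i x, noisy_enum c (Lang i) x ->
    (rho%:E <= limn_einf (fun n => mu_low (G (prefix x n)) (Lang i)))%E.

Definition inter_sub (Lang : nat -> pred nat) (F : seq nat) : pred nat :=
  fun y => all (fun i => Lang i y) F.

Definition density_condition (c rho : R) (Lang : nat -> pred nat) : Prop :=
  forall F : seq nat, F <> [::] ->
  forall x : nat -> nat, enumeration x ->
    (exists2 i, i \in F &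
       forall N, exists n, (N <= n)%N /\ c < noise_rate (Lang i) x n)
    \/
    (forall i, i \in F -> (rho%:E <= mu_low (inter_sub Lang F) (Lang i))%E).

End Defs.

(* Necessity: if no language of a finite subcollection F is too noisy along x
   infinitely often, a single enumeration is admissible for every member of F at
   once (x itself when c < 1, since each member is then listed infinitely often;
   the identity when c = 1).  A generator that generates in the limit eventually
   outputs subsets of the intersection of F along it, so that intersection
   inherits lower density rho in every member.
   Sufficiency: after seeing s, the generator considers for each t <= size s the
   indices i <= t whose noise rate stayed at most c at all times in (t, size s],
   and outputs the unseen part of the intersection of these languages for the
   largest t at which they satisfy the density requirement.  For the target
   Lang i and k beyond i and the noise horizon of Lang i, the survivors at k are
   eventually exactly the indices whose noise rate stays at most c forever after
   k; the condition forces this family to satisfy the density requirement, so the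
   chosen t is at least k, its family contains i, and removing finitely many seen
   points does not lower the density. *)

From Pilot Require Import Defs.
From HB Require Import structures.
From mathcomp Require Import all_boot all_order all_algebra.
From mathcomp Require Import all_classical all_reals all_analysis.
From mathcomp Require Import lra zify.
Import Order.TTheory GRing.Theory Num.Theory.
Local Open Scope ring_scope.
Set Implicit Arguments. Unset Strict Implicit.

Section limn_einf_eventually.
Variable R : realType.
Implicit Types (u v : (\bar R)^nat) (y : \bar R).
Local Open Scope ereal_scope.

Lemma limn_einfE u : limn_einf u = ereal_sup (range (einfs u)).
Proof. by rewrite limn_einf_lim; apply/cvg_lim => //; exact: cvg_einfs_sup. Qed.

Lemma einfs_le u n k : (n <= k)%N -> einfs u n <= u k.
Proof. by move=> nk; apply: ereal_inf_lbound; exists k. Qed.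

Lemma limn_einf_ge u N y : (forall k, (N <= k)%N -> y <= u k) -> y <= limn_einf u.
Proof.
move=> yu; rewrite limn_einfE; apply: le_trans (ereal_sup_ubound _); last by exists N.
by apply: le_ereal_inf_tmp => _ [k Nk <-]; apply: yu.
Qed.

Lemma limn_einf_le u N y : (forall k, (N <= k)%N -> u k <= y) -> limn_einf u <= y.
Proof.
move=> uy; rewrite limn_einfE; apply: ge_ereal_sup => _ [n _ <-].
by apply: le_trans (einfs_le u (leq_maxl n N)) (uy _ (leq_maxr n N)).
Qed.

Lemma le_limn_einf u v : (forall k, u k <= v k) -> limn_einf u <= limn_einf v.
Proof.
move=> uv; rewrite [X in X <= _]limn_einfE; apply: ge_ereal_sup => _ [n _ <-].
rewrite limn_einfE; apply: le_trans (ereal_sup_ubound _); last by exists n.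
by apply: le_ereal_inf_tmp => _ [k nk <-]; apply: le_trans (einfs_le u nk) _.
Qed.

Lemma limn_einf_gt u y : y < limn_einf u -> exists N, forall k, (N <= k)%N -> y < u k.
Proof.
rewrite limn_einfE => /ereal_sup_gt [_ [N _ <-] yN].
by exists N => k Nk; apply: lt_le_trans yN (einfs_le u Nk).
Qed.

End limn_einf_eventually.

Lemma natr_eventually_gt (R : realType) (a : R) :
  exists N, forall k, (N <= k)%N -> a < k%:R.
Proof.
exists (Num.truncn a).+1 => k Nk; apply: lt_le_trans (truncnS_gt a) _.
by rewrite ler_nat.
Qed.

Lemma limn_einf_ge_perturb (R : realType) (a b : nat -> R) (C r : R) :
  (forall k, a k <= b k + C / k.+1%:R) ->
  (r%:E <= limn_einf (fun k => (a k)%:E))%E ->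
  (r%:E <= limn_einf (fun k => (b k)%:E))%E.
Proof.
move=> ab ra; apply/lee_subgt0Pr => e e0.
have /limn_einf_gt [N1 aN1] : ((r - e / 2)%:E < limn_einf (fun k => (a k)%:E))%E.
  by apply: lt_le_trans ra; rewrite lte_fin; lra.
have [N2 CN2] := natr_eventually_gt (C / (e / 2)).
rewrite -EFinB; apply: (limn_einf_ge (N := maxn N1 N2)) => k; rewrite geq_max.
case/andP=> /aN1; rewrite !lte_fin lee_fin => ak /(leq_trans)/(_ (leqnSn k)) /CN2.
have k0 : (0 : R) < k.+1%:R by rewrite ltr0n.
rewrite ltr_pdivrMr ?divr_gt0 // mulrC -ltr_pdivrMr // => Ck.
by move: (C / _) Ck (ab k) => d; lra.
Qed.

Lemma count_iotaSr (B : pred nat) b :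
  count B (iota 0 b.+1) = (count B (iota 0 b) + B b)%N.
Proof. by rewrite -addn1 iotaD count_cat /= add0n addn0. Qed.

Lemma leq_count_iota (B : pred nat) b b' : (b <= b')%N ->
  (count B (iota 0 b) <= count B (iota 0 b'))%N.
Proof. by move/subnKC <-; rewrite iotaD count_cat leq_addr. Qed.

Lemma count_predU_leq (T : Type) (a1 a2 : pred T) (s : seq T) :
  (count (predU a1 a2) s <= count a1 s + count a2 s)%N.
Proof. by rewrite -count_predUI leq_addr. Qed.

Lemma count_inj_mem (f : nat -> nat) (s : seq nat) m : injective f ->
  (count (fun t => f t \in s) (iota 0 m) <= size s)%N.
Proof.
move=> f_inj; rewrite -size_filter -(size_map f); apply: uniq_leq_size.
  by rewrite map_inj_uniq // filter_uniq // iota_uniq.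
by move=> y /mapP [t]; rewrite mem_filter => /andP [ft _] ->.
Qed.

Section nth_elt.
Variables (B : pred nat) (B_inf : infinite_lang B).

Lemma count_iota_unbounded t : exists b, (t <= count B (iota 0 b))%N.
Proof.
elim: t => [|t [b tb]]; first by exists 0%N.
have [b' [bb' Bb']] := B_inf b.
exists b'.+1; rewrite count_iotaSr Bb' addn1 ltnS.
exact: leq_trans tb (leq_count_iota B bb').
Qed.

(* The least [b] with more than [t] elements of [B] below it is the [t]-th one. *)
Lemma nth_eltP t : B (nth_elt B t) /\ count B (iota 0 (nth_elt B t)) = t.
Proof.
apply: (xgetPex 0%N (P := [set b | B b /\ count B (iota 0 b) = t])).
have [[|b] tb b_min] := ex_minnP (count_iota_unbounded t.+1); first by [].
have bt : (count B (iota 0 b) <= t)%N.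
  by rewrite leqNgt; apply/negP => /b_min; rewrite ltnn.
move: tb; rewrite count_iotaSr; case Bb: (B b) => /=.
  by rewrite addn1 ltnS => tb; exists b; split => //; apply/eqP; rewrite eqn_leq bt.
by rewrite addn0 => tb; move: (leq_trans tb bt); rewrite ltnn.
Qed.

Lemma nth_elt_inj : injective (nth_elt B).
Proof. by move=> t t' e; rewrite -(nth_eltP t).2 -(nth_eltP t').2 e. Qed.

End nth_elt.

Section mu_low.
Variable R : realType.

Lemma le_mu_low (A A' B : pred nat) :
  (forall y, A y -> A' y) -> (@mu_low R A B <= @mu_low R A' B)%E.
Proof.
move=> AA'; apply: le_limn_einf => k; rewrite lee_fin ler_wpM2r ?invr_ge0 // ler_nat.
by apply: sub_count => t; apply: AA'.
Qed.

(* Removing finitely many points changes the [k]-th ratio by at most [size s / k]. *)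
Lemma mu_low_ge_notin (A B : pred nat) (s : seq nat) (r : R) :
  infinite_lang B -> (r%:E <= mu_low A B)%E ->
  (r%:E <= mu_low (fun y => (y \notin s) && A y) B)%E.
Proof.
move=> B_inf; apply: (limn_einf_ge_perturb (C := (size s)%:R)) => k.
rewrite -mulrDl ler_wpM2r ?invr_ge0 // -natrD ler_nat.
set a1 := fun t => (nth_elt B t \notin s) && A (nth_elt B t).
set a2 := fun t => nth_elt B t \in s.
have /leq_trans -> // : (count (fun t => A (nth_elt B t)) (iota 0 k.+1)
    <= count (predU a1 a2) (iota 0 k.+1))%N.
  by apply: sub_count => t /=; rewrite /a1 /a2 => ->; case: (_ \in s).
apply: leq_trans (count_predU_leq a1 a2 _) _; rewrite leq_add2l.
exact: count_inj_mem (nth_elt_inj B_inf).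
Qed.

End mu_low.

Lemma count_compl_bounded (A : pred nat) (x : nat -> nat) m0 n : injective x ->
  (forall y, A y -> (y < m0)%N) ->
  (n <= count (fun t => ~~ A (x t)) (iota 0 n) + m0)%N.
Proof.
move=> x_inj Am0; rewrite -{1}(size_iota 0 n) -count_predT.
apply: leq_trans (sub_count _ _)
  (leq_trans (count_predU_leq (fun t => ~~ A (x t)) (fun t => x t \in iota 0 m0) _) _).
  by move=> t _ /=; case Axt: (A (x t)) => //=; rewrite mem_iota add0n Am0.
by rewrite leq_add2l -{2}(size_iota 0 m0); apply: count_inj_mem.
Qed.

Section noise_rate.
Variable R : realType.
Implicit Types (L K A : pred nat) (x : nat -> nat) (c : R).

Lemma noise_rate_le1 L x n : noise_rate L x n <= 1 :> R.
Proof.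
rewrite /noise_rate; case: n => [|n]; first by rewrite invr0 mulr0.
rewrite ler_pdivrMr ?ltr0n // mul1r ler_nat.
by apply: leq_trans (count_size _ _) _; rewrite size_iota.
Qed.

Lemma le_noise_rate K A x n :
  (forall y, A y -> K y) -> noise_rate K x n <= noise_rate A x n :> R.
Proof.
move=> AK; rewrite /noise_rate ler_wpM2r ?invr_ge0 // ler_nat.
by apply: sub_count => t /=; apply: contra; exact: AK.
Qed.

Lemma noise_rate_prefix L x n m : (m <= n)%N ->
  noise_rate L (nth 0%N (Defs.prefix x n)) m = noise_rate L x m :> R.
Proof.
move=> mn; rewrite /noise_rate; congr (_%:R / _).
apply: eq_in_count => t; rewrite mem_iota add0n => /andP [_ tm].
by rewrite (nth_map 0%N) ?size_iota ?nth_iota //; apply: leq_trans tm mn.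
Qed.

(* If [A] is bounded, all but finitely many points of [x] are noise, so the rate tends to 1. *)
Lemma infinite_of_noise_rate A x c : injective x -> c < 1 ->
  (exists N, forall n, (N <= n)%N -> noise_rate A x n <= c) -> infinite_lang A.
Proof.
move=> x_inj c1 [N AN]; apply: contrapT => A_fin.
have [m0 Am0] : exists m0, forall y, A y -> (y < m0)%N.
  apply: contrapT => unb; apply: A_fin => m; apply: contrapT => Am.
  by apply: unb; exists m => y Ay; rewrite ltnNge; apply/negP => my; apply: Am; exists y.
have [N' m0N'] := natr_eventually_gt (m0%:R / (1 - c)).
pose n := maxn N N'; have := AN n (leq_maxl _ _); have := m0N' n (leq_maxr _ _).
have := count_compl_bounded n x_inj Am0; rewrite -(ler_nat R) natrD /noise_rate.
move: (count _ _) => cnt nm0 m0n cntn.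
have n0 : (0 : R) < n%:R.
  by apply: le_lt_trans m0n; rewrite divr_ge0 // subr_ge0 ltW.
rewrite ltr_pdivrMr ?subr_gt0 // in m0n; rewrite ler_pdivrMr // in cntn; lra.
Qed.

Lemma noisy_enum_id K c : 1 <= c -> infinite_lang K -> noisy_enum c K id.
Proof.
move=> c1 K_inf; split; first by [].
exists K; split => //; first by move=> y; exists y.
by exists 0%N => n _; apply: le_trans (noise_rate_le1 _ _ _) c1.
Qed.

(* The retained part is what [x] actually lists of [K]. *)
Lemma noisy_enum_of_noise_rate K x c : injective x -> c < 1 ->
  (exists N, forall n, (N <= n)%N -> noise_rate K x n <= c) -> noisy_enum c K x.
Proof.
move=> x_inj c1 [N KN]; split => //.
pose Khat y := K y && `[< exists t, x t = y >].
have noise_Khat n : noise_rate Khat x n = noise_rate K x n.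
  rewrite /noise_rate; congr (_%:R / _); apply: eq_count => t.
  by rewrite /Khat (asboolT (ex_intro (fun u => x u = x t) t erefl)) andbT.
exists Khat; split.
- by move=> y /andP [].
- by apply: (infinite_of_noise_rate x_inj c1); exists N => n Nn; rewrite noise_Khat KN.
- by move=> y /andP [_ /asboolP].
- by exists N => n Nn; rewrite noise_Khat KN.
Qed.

End noise_rate.

Lemma eventually_forall_seq (T : eqType) (F : seq T) (Q : T -> nat -> Prop) :
  (forall j, j \in F -> exists N, forall n, (N <= n)%N -> Q j n) ->
  exists N, forall j, j \in F -> forall n, (N <= n)%N -> Q j n.
Proof.
elim: F => [|a F IH] QF; first by exists 0%N.
have [Na QNa] := QF a (mem_head _ _).
have [NF QNF] : exists N, forall j, j \in F -> forall n, (N <= n)%N -> Q j n.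
  by apply: IH => j jF; apply: QF; rewrite inE jF orbT.
exists (maxn Na NF) => j; rewrite inE => /orP [/eqP -> | jF] n; rewrite geq_max.
  by case/andP => /QNa.
by case/andP => _ /QNF; apply.
Qed.

Section necessity.
Variables (R : realType) (Lang : nat -> pred nat) (c rho : R).
Hypotheses (Lang_inf : forall i, infinite_lang (Lang i)) (c_le1 : c <= 1).

(* For [c = 1] the noisy enumeration [x] may list only finitely many points of
   some language, so the identity enumeration is used instead. *)
Lemma noisy_enum_common (F : seq nat) (x : nat -> nat) : injective x ->
  (forall j, j \in F -> exists N, forall n, (N <= n)%N -> noise_rate (Lang j) x n <= c) ->
  exists z, forall j, j \in F -> noisy_enum c (Lang j) z.
Proof.
move=> x_inj Fx; have [c1|c1] := leP 1 c.
  by exists id => j _; apply: noisy_enum_id.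
by exists x => j jF; apply: noisy_enum_of_noise_rate => //; apply: Fx.
Qed.

Lemma necessity (G : seq nat -> pred nat) :
  generates_in_limit c Lang G -> achieves_density c rho Lang G ->
  density_condition c rho Lang.
Proof.
move=> G_lim G_dens F _ x x_inj.
case: (pselect (exists2 i, i \in F &
   forall N, exists n, (N <= n)%N /\ c < noise_rate (Lang i) x n)) => [|F_low]; first by left.
right => i iF.
have F_ev j : j \in F -> exists N, forall n, (N <= n)%N -> noise_rate (Lang j) x n <= c.
  move=> jF; apply: contrapT => j_high; apply: F_low; exists j => // N.
  apply: contrapT => N_low; apply: j_high; exists N => n Nn.
  by rewrite leNgt; apply/negP => cn; apply: N_low; exists n.
have [z z_adm] := noisy_enum_common x_inj F_ev.
have [N GN] := eventually_forall_seq (fun j jF => G_lim j z (z_adm j jF)).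
apply: le_trans (G_dens i z (z_adm i iF)) _.
apply: (limn_einf_le (N := N)) => n Nn; apply: le_mu_low => y Gy.
by apply/allP => j jF; apply: GN Gy.
Qed.

End necessity.

Lemma size_prefix x n : size (Defs.prefix x n) = n.
Proof. by rewrite size_map size_iota. Qed.

Section generator_construction.
Variables (R : realType) (Lang : nat -> pred nat) (c rho : R).

Definition survivors (s : seq nat) (t : nat) : seq nat :=
  [seq i <- iota 0 t.+1 |
    all (fun m => noise_rate (Lang i) (nth 0%N s) m <= c) (iota t.+1 (size s - t))].

Definition dense_family (F : seq nat) : bool :=
  `[< forall i, i \in F -> (rho%:E <= mu_low (inter_sub Lang F) (Lang i))%E >].

Definition threshold (s : seq nat) : nat :=
  \big[maxn/0%N]_(t < (size s).+1 | dense_family (survivors s t)) t.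

Definition generator (s : seq nat) : pred nat :=
  fun y => (y \notin s) && inter_sub Lang (survivors s (threshold s)) y.

Lemma thresholdP s k : (k <= size s)%N -> dense_family (survivors s k) ->
  (k <= threshold s)%N /\ dense_family (survivors s (threshold s)).
Proof.
rewrite -ltnS => ks dense_k; pose k' := Ordinal ks.
have dense_k' : dense_family (survivors s k') by [].
split; first exact: leq_bigmax_cond dense_k'.
by rewrite /threshold (bigop.bigmax_eq_arg k') //; case: arg_maxnP.
Qed.

Lemma mem_survivors s t i : (i <= t)%N ->
  (forall m, (t < m <= size s)%N -> noise_rate (Lang i) (nth 0%N s) m <= c) ->
  i \in survivors s t.
Proof.
move=> it i_low; rewrite mem_filter mem_iota ltnS it /= andbT.
by apply/allP => m; rewrite mem_iota => /andP [tm ms]; apply: i_low; lia.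
Qed.

Definition low_noise_after (x : nat -> nat) (k j : nat) : bool :=
  `[< forall m, (k < m)%N -> noise_rate (Lang j) x m <= c >].

Lemma all_noise_rate_prefix_eventually x k j : exists N, forall n, (N <= n)%N ->
  all (fun m => noise_rate (Lang j) (nth 0%N (Defs.prefix x n)) m <= c)
      (iota k.+1 (n - k)) = low_noise_after x k j.
Proof.
have [j_low|] := boolP (low_noise_after x k j).
  exists 0%N => n _; apply/allP => m; rewrite mem_iota => /andP [km mn].
  rewrite noise_rate_prefix; last by lia.
  by move/asboolP: j_low; apply.
move/asboolPn => j_high; have [m [km cm]] : exists m, (k < m)%N /\ c < noise_rate (Lang j) x m.
  apply: contrapT => m_low; apply: j_high => m km; rewrite leNgt; apply/negP => cm.
  by apply: m_low; exists m.
exists m => n mn; apply/negbTE/allPn; exists m; first by rewrite mem_iota; lia.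
by rewrite noise_rate_prefix // -ltNge.
Qed.

Lemma survivors_prefix_eventually x k : exists N, forall n, (N <= n)%N ->
  survivors (Defs.prefix x n) k = [seq j <- iota 0 k.+1 | low_noise_after x k j].
Proof.
have [N NF] := eventually_forall_seq
  (fun j (_ : j \in iota 0 k.+1) => all_noise_rate_prefix_eventually x k j).
exists N => n Nn; apply: eq_in_filter => j jk.
by rewrite size_prefix -(NF j jk n Nn).
Qed.

Hypothesis dense_cond : density_condition c rho Lang.

(* Once [k] exceeds both [i] and the time after which the retained part of
   [Lang i] has noise rate at most [c], the threshold never drops below [k]. *)
Lemma survivors_threshold_eventually i x : noisy_enum c (Lang i) x ->
  exists N, forall n, (N <= n)%N ->
    let s := Defs.prefix x n in
    i \in survivors s (threshold s) /\ dense_family (survivors s (threshold s)).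
Proof.
move=> [x_inj [Khat [Khat_sub _ _ [N KhatN]]]].
have i_low m : (N <= m)%N -> noise_rate (Lang i) x m <= c.
  by move=> Nm; apply: le_trans (KhatN m Nm); apply: le_noise_rate.
pose k := maxn N i; pose P := [seq j <- iota 0 k.+1 | low_noise_after x k j].
have iP : i \in P.
  have ik : (i <= k)%N := leq_maxr N i.
  rewrite mem_filter mem_iota ltnS /= ik andbT; apply/asboolP => m km.
  by apply: i_low; apply: leq_trans (ltnW km); apply: leq_maxl.
have dense_P : dense_family P.
  have P0 : P <> [::] by move=> P0; rewrite P0 in iP.
  apply/asboolP; case: (dense_cond P0 x_inj) => // [[j jP j_high]].
  have [m [km cm]] := j_high k.+1; move: jP; rewrite mem_filter => /andP [/asboolP j_low _].
  by move: (j_low m km); rewrite leNgt cm.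
have [N' N'P] := survivors_prefix_eventually x k.
exists (maxn N' k) => n; rewrite geq_max => /andP [N'n kn] s.
have [kt dense_t] : (k <= threshold s)%N /\ dense_family (survivors s (threshold s)).
  by apply: thresholdP; rewrite /s ?size_prefix ?N'P.
split => //; apply: mem_survivors; first exact: leq_trans (leq_maxr _ _) kt.
move=> m /andP [tm]; rewrite /s size_prefix => mn; rewrite noise_rate_prefix //.
by apply: i_low; apply: leq_trans (leq_maxl N i) (leq_trans kt (ltnW tm)).
Qed.

Hypothesis Lang_inf : forall i, infinite_lang (Lang i).

Lemma generator_spec :
  [/\ set_generator generator, generates_in_limit c Lang generator
     & achieves_density c rho Lang generator].
Proof.
split.
- by move=> s y ys; rewrite /generator ys.
- move=> i x x_adm; have [N NT] := survivors_threshold_eventually x_adm.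
  exists N => n Nn y /andP [_ /allP]; apply; exact: (NT n Nn).1.
- move=> i x x_adm; have [N NT] := survivors_threshold_eventually x_adm.
  apply: (limn_einf_ge (N := N)) => n Nn; have [iT /asboolP dense_T] := NT n Nn.
  exact: mu_low_ge_notin (Lang_inf i) (dense_T i iT).
Qed.

End generator_construction.

Theorem theorem6p14 (R : realType) (Lang : nat -> pred nat) (c rho : R) :
  (forall i, infinite_lang (Lang i)) ->
  0 < c <= 1 -> 0 < rho <= 1 ->
  (exists G : seq nat -> pred nat,
      [/\ set_generator G, generates_in_limit c Lang G &
          achieves_density c rho Lang G])
  <-> density_condition c rho Lang.
Proof.
move=> Lang_inf /andP [_ c_le1] _; split.
  by case=> G [_ G_lim G_dens]; exact: necessity G_lim G_dens.
by move=> dense_cond; exists (generator Lang c rho); exact: generator_spec.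
Qed.
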